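(* Let $\delta_\ell=94/194$. Let $G=(V,E)$ be an $(n-4)$-regular graph on $n>4$ nodes in which every clique has at most $\delta_\ell n$ nodes. Let $\emptyset\ne V'\subseteq V$ with $|V'|=tn$ and $0<t\le 1/2$. Then $$\mathsf M(V')\le\frac{2\delta_\ell-\tfrac12}{n-4}.$$
   Context: For a finite simple undirected graph $G=(V,E)$ with $m=|E|\ge1$ edges, degrees $d_v$, and $a_{u,v}=1$ if $\{u,v\}\in E$ and $0$ otherwise: for $C\subseteq V$, $\mathsf M(C)=\frac{1}{2m}\sum_{u\in C}\sum_{v\in C}\big(a_{u,v}-\frac{d_ud_v}{2m}\big)$, the sum over all ordered pairs including $u=v$. *)

From mathcomp Require Import all_boot all_order all_algebra.
Set Implicit Arguments. Unset Strict Implicit. Unset Printing Implicit Defensive.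
Import Order.TTheory GRing.Theory Num.Theory.
Local Open Scope ring_scope.

Definition simple_graph (T : finType) (e : rel T) : Prop :=
  symmetric e /\ irreflexive e.

Definition deg (T : finType) (e : rel T) (v : T) : nat := #|[set u | e v u]|.

Definition two_m (T : finType) (e : rel T) : rat := (\sum_(v : T) deg e v)%:R.

Definition adj (T : finType) (e : rel T) (u v : T) : rat := (e u v)%:R.

Definition modularity (T : finType) (e : rel T) (C : {set T}) : rat :=
  (two_m e)^-1 * \sum_(u in C) \sum_(v in C)
     (adj e u v - (deg e u)%:R * (deg e v)%:R / two_m e).

Definition is_clique (T : finType) (e : rel T) (K : {set T}) : Prop :=
  forall u v, u \in K -> v \in K -> u != v -> e u v.

Definition delta_l : rat := 94%:R / 194%:R.

From mathcomp Require Import all_boot all_order all_algebra.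
From mathcomp Require Import ring lra.
Import Order.TTheory GRing.Theory Num.Theory.
Local Open Scope ring_scope.
Set Implicit Arguments. Unset Strict Implicit.

(* Let k = |V'| and let N count the non-adjacent pairs inside V'.  In an
   (n-4)-regular graph 2m = n(n-4), and at most k^2 - k - 2N ordered pairs of
   V' are adjacent, so (n-4) M(V') <= t(4t-1) - 2N/n.  Deleting one endpoint
   of every non-adjacent pair leaves a clique, whence t <= delta_l + N/n; the
   quadratic t(4t-1) - 2 max(0, t - delta_l) is at most 2 delta_l - 1/2 on
   [0, 1/2] because (4t-1)(t-1/2) <= 0 on [1/4, 1/2]. *)

Lemma quadratic_slack_le (R : realFieldType) (d t x : R) :
  1 / 4 <= d -> d <= 1 / 2 -> 0 <= t -> t <= 1 / 2 -> 0 <= x -> t <= d + x ->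
  t * (4 * t - 1) - 2 * x <= 2 * d - 1 / 2.
Proof.
move=> d_ge d_le t_ge0 t_le x_ge0 t_le_dx.
have [t_le_d | d_lt_t] := leP t d; nra.
Qed.

(* A counts the ordered adjacent pairs of a set of k = t n vertices and N its
   non-adjacent pairs; the left-hand side is its modularity when 2m = n(n-4). *)
Lemma regular_modularity_bound (R : realFieldType) (d n A k N t : R) :
  1 / 4 <= d -> d <= 1 / 2 -> 4 < n -> 0 <= N ->
  A + k + 2 * N <= k ^+ 2 -> k <= d * n + N -> k = t * n -> 0 < t -> t <= 1 / 2 ->
  (n * (n - 4))^-1 * (A - k ^+ 2 * (n - 4) / n) <= (2 * d - 1 / 2) / (n - 4).
Proof.
move=> d_ge d_le n_gt4 N_ge0 count_le k_le k_eq t_gt0 t_le.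
have n_gt0 : 0 < n by lra.
have n4_gt0 : 0 < n - 4 by lra.
have x_ge0 : 0 <= N / n by rewrite divr_ge0 // ltW.
have t_le_dx : t <= d + N / n.
  by rewrite -(ler_pM2r n_gt0) mulrDl mulfVK ?gt_eqF // -k_eq.
have slack := ler_wpM2r (ltW n_gt0)
  (quadratic_slack_le d_ge d_le (ltW t_gt0) t_le x_ge0 t_le_dx).
have Nn_eq : N / n * n = N by rewrite mulfVK ?gt_eqF.
rewrite invfM mulrC mulrA ler_pM2r ?invr_gt0 // ler_pdivrMr //.
have -> : k ^+ 2 * (n - 4) / n = t ^+ 2 * n * (n - 4).
  by rewrite k_eq; field; rewrite gt_eqF.
rewrite k_eq in count_le; lra.
Qed.

Lemma enum_rank_lt_total (T : finType) (u v : T) : u != v ->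
  (enum_rank u < enum_rank v)%N || (enum_rank v < enum_rank u)%N.
Proof. by rewrite -neq_ltn val_eqE (inj_eq enum_rank_inj). Qed.

Section NonEdges.
Variables (T : finType) (e : rel T).
Hypotheses (e_sym : symmetric e) (e_irr : irreflexive e).

Definition lower_nonadj (u v : T) : bool := ~~ e u v && (enum_rank v < enum_rank u)%N.

Definition nonedges (C : {set T}) : nat :=
  \sum_(u in C) \sum_(v in C) lower_nonadj u v.

Definition edges_in (C : {set T}) : nat := \sum_(u in C) \sum_(v in C) e u v.

Lemma pair_count_le1 (u v : T) :
  (e u v + (u == v) + lower_nonadj u v + lower_nonadj v u <= 1)%N.
Proof.
rewrite /lower_nonadj; have [->|uv] := eqVneq u v; first by rewrite e_irr ltnn.
rewrite [e v u]e_sym; case: (e u v) => //=.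
by case/orP: (enum_rank_lt_total uv) => lt; rewrite lt ltnNge (ltnW lt).
Qed.

Lemma edges_nonedges_le (C : {set T}) :
  (edges_in C + #|C| + 2 * nonedges C <= #|C| ^ 2)%N.
Proof.
have diag : (\sum_(u in C) \sum_(v in C) (u == v))%N = #|C|.
  rewrite -sum1_card; apply: eq_bigr => u uC.
  rewrite (bigD1 u) //= eqxx big1 ?addn0 // => v /andP[_ vu].
  by rewrite eq_sym (negbTE vu).
have swap : (\sum_(u in C) \sum_(v in C) lower_nonadj v u)%N = nonedges C.
  by rewrite /nonedges exchange_big.
have bound : (\sum_(u in C) \sum_(v in C)
    (e u v + (u == v) + lower_nonadj u v + lower_nonadj v u) <= #|C| ^ 2)%N.
  apply: (@leq_trans (\sum_(u in C) \sum_(v in C) 1)%N).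
    by apply: leq_sum => u _; apply: leq_sum => v _; apply: pair_count_le1.
  by under eq_bigr => u _ do rewrite sum1_card; rewrite sum_nat_const.
move: bound; under eq_bigr => u _ do rewrite !big_split.
by rewrite !big_split /= diag swap mul2n -addnn !addnA.
Qed.

(* Removing every vertex that has a non-neighbour of lower rank leaves a clique. *)
Lemma clique_of_nonedges (C : {set T}) :
  exists2 K : {set T}, is_clique e K & (#|C| <= #|K| + nonedges C)%N.
Proof.
set R := [set u in C | [exists v in C, lower_nonadj u v]].
exists (C :\: R).
  move=> u v /setDP[uC uR] /setDP[vC vR] uv; apply/idPn => euv.
  case/orP: (enum_rank_lt_total uv) => lt.
    by move/negP: vR; apply; rewrite inE vC; apply/existsP; exists u;
      rewrite uC /lower_nonadj e_sym euv.
  by move/negP: uR; apply; rewrite inE uC; apply/existsP; exists v;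
    rewrite vC /lower_nonadj euv.
rewrite -(cardsID R C) addnC leq_add2l -sum1_card.
apply: (@leq_trans (\sum_(u in C :&: R) \sum_(v in C) lower_nonadj u v)%N).
  apply: leq_sum => u; rewrite !inE => /andP[_ /andP[_ /existsP[v /andP[vC lt]]]].
  by rewrite (bigD1 v) //= lt.
by rewrite /nonedges [X in (_ <= X)%N](big_setID R) /= leq_addr.
Qed.

End NonEdges.

Lemma two_m_regular (T : finType) (e : rel T) (r : nat) :
  (forall v, deg e v = r) -> two_m e = (#|T| * r)%:R.
Proof. by move=> reg; rewrite /two_m (eq_bigr _ (fun v _ => reg v)) sum_nat_const. Qed.

Lemma natr_edges_in (T : finType) (e : rel T) (C : {set T}) :
  (edges_in e C)%:R = \sum_(u in C) \sum_(v in C) adj e u v.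
Proof. by rewrite natr_sum; apply: eq_bigr => u _; rewrite natr_sum. Qed.

Lemma modularity_regular (T : finType) (e : rel T) (r : nat) (C : {set T}) :
  (forall v, deg e v = r) ->
  modularity e C =
    ((#|T| * r)%:R)^-1 * ((edges_in e C)%:R - #|C|%:R ^+ 2 * r%:R / #|T|%:R).
Proof.
move=> reg; rewrite /modularity (two_m_regular reg) natr_edges_in.
under eq_bigr => u _ do under eq_bigr => v _ do rewrite !reg.
under eq_bigr => u _ do rewrite sumrB sumr_const.
rewrite sumrB sumr_const -mulrnA.
suff -> : r%:R * r%:R / (#|T| * r)%:R *+ (#|C| * #|C|)
          = #|C|%:R ^+ 2 * r%:R / #|T|%:R :> rat by [].
rewrite -mulr_natl !natrM.
have [->|r_neq0] := eqVneq r 0%N; first by rewrite !(mul0r, mulr0, muln0).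
have [->|n_neq0] := eqVneq #|T| 0%N; first by rewrite !(mul0r, mulr0, invr0).
by field; rewrite !pnatr_eq0 r_neq0 n_neq0.
Qed.

Theorem lemma5 (T : finType) (e : rel T) (V' : {set T}) (t : rat) :
  simple_graph e ->
  (4 < #|T|)%N ->
  (forall v : T, deg e v = (#|T| - 4)%N) ->
  (forall K : {set T}, is_clique e K -> (#|K|%:R : rat) <= delta_l * (#|T|%:R)) ->
  V' != set0 ->
  (#|V'|%:R : rat) = t * (#|T|%:R) ->
  0 < t -> t <= 1 / 2%:R ->
  modularity e V' <= (2%:R * delta_l - 1 / 2%:R) / ((#|T| - 4)%N)%:R.
Proof.
move=> [e_sym e_irr] n_gt4 reg clique_le _ k_eq t_gt0 t_le.
have [K K_clique k_le] := clique_of_nonedges e_sym V'.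
rewrite (modularity_regular _ reg) (natrM _ #|T|) (natrB _ (ltnW n_gt4)).
apply: (regular_modularity_bound (N := (nonedges e V')%:R) _ _ _ _ _ _ k_eq t_gt0 t_le).
- by rewrite /delta_l; lra.
- by rewrite /delta_l; lra.
- by rewrite ltr_nat.
- exact: ler0n.
- by rewrite -natrX -natrM -!natrD ler_nat edges_nonedges_le.
- apply: (@le_trans _ _ (#|K|%:R + (nonedges e V')%:R)).
    by rewrite -natrD ler_nat.
  by rewrite lerD2r clique_le.
Qed.
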